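(* Let $X$ be a transitive BE-algebra, $k\in(-1,0]$, and $(X,f)$ an $N$-structure on $X$. For $t\in[-1,0)$ let $[f]_t=\{x\in X: f(x)\le t\}\cup\{x\in X: f(x)+t+k+1\le 0\}$. Then $(X,f)$ is an $([e],[e]\vee[c_k])$-ideal of $X$ if and only if for every $t\in[-1,0)$ the set $[f]_t$ is either empty or an ideal of $X$.
   Context: A BE-algebra is a set $X$ with a binary operation $*$ and a distinguished element $1$ such that for all $x,y,z\in X$: $x*x=1$, $x*1=1$, $1*x=x$, and $x*(y*z)=y*(x*z)$. Write $x\le y$ iff $x*y=1$. A BE-algebra is transitive if $y*z\le(x*y)*(x*z)$ for all $x,y,z\in X$. An ideal of $X$ is a nonempty subset $I\subseteq X$ such that $x*s\in I$ for all $x\in X$, $s\in I$, and $(s*(q*x))*x\in I$ for all $x\in X$ and $s,q\in I$. An $N$-structure on $X$ is a pair $(X,f)$ where $f:X\to[-1,0]$ is any function. Fix $k\in(-1,0]$. For $x\in X$ and $t\in[-1,0)$, write $\frac{x}{t}[e]f$ if $f(x)\le t$, and $\frac{x}{t}[c_k]f$ if $f(x)+t+k+1<0$; write $\frac{x}{t}([e]\vee[c_k])f$ if at least one of these holds. The $N$-structure $(X,f)$ is an $([e],[e]\vee[c_k])$-ideal of $X$ if for all $x,y,z\in X$ and all $t,r\in[-1,0)$: (i) $f(y)\le t$ implies $\frac{x*y}{t}([e]\vee[c_k])f$; (ii) $f(x)\le t$ and $f(y)\le r$ together imply $\frac{(x*(y*z))*z}{\max\{t,r\}}([e]\vee[c_k])f$.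 *)

From Stdlib Require Import Reals.
Open Scope R_scope.

Definition BE_algebra {X : Type} (op : X -> X -> X) (one : X) : Prop :=
  (forall x, op x x = one) /\
  (forall x, op x one = one) /\
  (forall x, op one x = x) /\
  (forall x y z, op x (op y z) = op y (op x z)).

Definition BE_le {X : Type} (op : X -> X -> X) (one : X) (x y : X) : Prop :=
  op x y = one.

Definition BE_transitive {X : Type} (op : X -> X -> X) (one : X) : Prop :=
  forall x y z, BE_le op one (op y z) (op (op x y) (op x z)).

Definition BE_ideal {X : Type} (op : X -> X -> X) (I : X -> Prop) : Prop :=
  (exists s, I s) /\
  (forall x s, I s -> I (op x s)) /\
  (forall x s q, I s -> I q -> I (op (op s (op q x)) x)).

Definition N_structure {X : Type} (f : X -> R) : Prop :=
  forall x, -1 <= f x <= 0.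

Definition pt_e {X : Type} (f : X -> R) (x : X) (t : R) : Prop := f x <= t.
Definition pt_ck {X : Type} (k : R) (f : X -> R) (x : X) (t : R) : Prop :=
  f x + t + k + 1 < 0.
Definition pt_e_or_ck {X : Type} (k : R) (f : X -> R) (x : X) (t : R) : Prop :=
  pt_e f x t \/ pt_ck k f x t.

Definition e_eck_ideal {X : Type} (op : X -> X -> X) (k : R) (f : X -> R) : Prop :=
  forall (x y z : X) (t r : R), -1 <= t < 0 -> -1 <= r < 0 ->
    (f y <= t -> pt_e_or_ck k f (op x y) t) /\
    (f x <= t -> f y <= r -> pt_e_or_ck k f (op (op x (op y z)) z) (Rmax t r)).

Definition level_set {X : Type} (k : R) (f : X -> R) (t : R) : X -> Prop :=
  fun x => f x <= t \/ f x + t + k + 1 <= 0.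

From Stdlib Require Import Reals Lra Classical.
Open Scope R_scope.

(* The argument is purely order-theoretic on the values of f.

   (=>) Fix t in [-1,0).  If t + k + 1 <= 0 then, since f <= 0, the level set
   [f]_t is all of X, which is an ideal.  Otherwise put m := max(t, -t-k-1);
   then m lies in [-1,0), [f]_t is the sublevel set {f <= m}, and the points
   "[e] \/ [c_k]" at level m also lie in {f <= m}.  Applying the two ideal
   conditions with t = r = m shows that {f <= m} is an ideal when nonempty.

   (<=) If a point lies in [f]_s for every s in [t,0), then it satisfies
   "[e] \/ [c_k]" at level t (choose s between t and f v).  A hypothesis
   f y <= t puts y in every [f]_s with s >= t, so those level sets are ideals,
   and the ideal conditions deliver the required points in all of them. *)

Section LevelSets.

Context {X : Type} {op : X -> X -> X} {k : R} {f : X -> R}.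
Hypothesis Hf : N_structure f.

Lemma BE_ideal_ext (P Q : X -> Prop) :
  (forall x, P x <-> Q x) -> BE_ideal op P -> BE_ideal op Q.
Proof.
  intros HPQ [[s Hs] [Hmul Hcomb]]; split; [|split].
  - exists s; apply HPQ; exact Hs.
  - intros x u Hu; apply HPQ, Hmul, HPQ; exact Hu.
  - intros x u q Hu Hq; apply HPQ, Hcomb; apply HPQ; assumption.
Qed.

Lemma BE_ideal_full (P : X -> Prop) (s : X) :
  (forall x, P x) -> BE_ideal op P.
Proof.
  intros HP; split; [exists s; apply HP | split; intros; apply HP].
Qed.

Lemma level_set_full (t : R) :
  t + k + 1 <= 0 -> forall x, level_set k f t x.
Proof.
  intros Ht x; right; specialize (Hf x); lra.
Qed.

Lemma level_set_as_sublevel (t : R) :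
  -1 <= t < 0 -> -1 < k -> 0 < t + k + 1 ->
  let m := Rmax t (- t - k - 1) in
  -1 <= m < 0 /\
  (forall x, level_set k f t x <-> f x <= m) /\
  (forall x, pt_e_or_ck k f x m -> f x <= m).
Proof.
  intros Ht Hk Htk m.
  assert (Hcase : (m = t /\ - t - k - 1 <= t) \/ (m = - t - k - 1 /\ t <= - t - k - 1)).
  { unfold m, Rmax; destruct (Rle_dec t (- t - k - 1)); [right | left]; lra. }
  unfold level_set, pt_e_or_ck, pt_e, pt_ck.
  destruct Hcase as [[Hm Hle] | [Hm Hle]]; rewrite Hm;
    repeat split; try lra; intros x; try split; intros [Hx | Hx]; lra.
Qed.

Lemma sublevel_ideal (m : R) :
  e_eck_ideal op k f -> -1 <= m < 0 ->
  (forall x, pt_e_or_ck k f x m -> f x <= m) ->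
  (exists s, f s <= m) ->
  BE_ideal op (fun x => f x <= m).
Proof.
  intros Hid Hm Hclosed Hne; split; [exact Hne | split].
  - intros x s Hs; apply Hclosed.
    destruct (Hid x s s m m Hm Hm) as [Hmul _]; exact (Hmul Hs).
  - intros x s q Hs Hq; apply Hclosed.
    destruct (Hid s q x m m Hm Hm) as [_ Hcomb].
    rewrite Rmax_left in Hcomb by lra; exact (Hcomb Hs Hq).
Qed.

Lemma in_all_level_sets (v : X) (t : R) :
  t < 0 ->
  (forall s, t <= s < 0 -> level_set k f s v) ->
  pt_e_or_ck k f v t.
Proof.
  intros Ht Hall; unfold pt_e_or_ck, pt_e, pt_ck.
  destruct (Rle_dec (f v) t) as [Hle | Hgt]; [left; exact Hle |].
  destruct (Rlt_dec (f v + t + k + 1) 0) as [Hlt | Hge]; [right; exact Hlt |].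
  exfalso; specialize (Hf v).
  destruct (Hall ((t + f v) / 2) ltac:(lra)) as [Hs | Hs]; lra.
Qed.

Lemma level_set_ideal_above (y : X) (t s : R) :
  (forall s, -1 <= s < 0 ->
     (forall x, ~ level_set k f s x) \/ BE_ideal op (level_set k f s)) ->
  -1 <= t -> f y <= t -> t <= s < 0 ->
  level_set k f s y /\ BE_ideal op (level_set k f s).
Proof.
  intros Hlev Ht Hy Hs.
  assert (Hys : level_set k f s y) by (left; lra).
  split; [exact Hys |].
  destruct (Hlev s ltac:(lra)) as [Hempty | Hideal];
    [exfalso; exact (Hempty y Hys) | exact Hideal].
Qed.

End LevelSets.

Theorem mainTheorem12 (X : Type) (op : X -> X -> X) (one : X)
  (HBE : BE_algebra op one) (Htr : BE_transitive op one)
  (k : R) (Hk : -1 < k <= 0) (f : X -> R) (Hf : N_structure f) :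
  e_eck_ideal op k f <->
  (forall t : R, -1 <= t < 0 ->
     (forall x, ~ level_set k f t x) \/ BE_ideal op (level_set k f t)).
Proof.
  split.
  - intros Hid t Ht.
    destruct (classic (exists s, level_set k f t s)) as [[s Hs] | Hempty];
      [right | left; intros x Hx; apply Hempty; exists x; exact Hx].
    destruct (Rle_dec (t + k + 1) 0) as [Hle | Hgt].
    + exact (BE_ideal_full _ s (level_set_full Hf t Hle)).
    + destruct (@level_set_as_sublevel X k f t Ht ltac:(lra) ltac:(lra))
        as [Hm [Hsub Hclosed]].
      apply (BE_ideal_ext _ _ (fun x => iff_sym (Hsub x))).
      apply (sublevel_ideal _ Hid Hm Hclosed); exists s; apply Hsub; exact Hs.
  - intros Hlev x y z t r Ht Hr; split.
    + intros Hy; apply (in_all_level_sets Hf _ _); [lra |]; intros s Hs.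
      destruct (level_set_ideal_above y t s Hlev (proj1 Ht) Hy Hs)
        as [Hys [_ [Hmul _]]].
      exact (Hmul x y Hys).
    + intros Hx Hy.
      pose proof (Rmax_l t r); pose proof (Rmax_r t r).
      assert (Hmax : Rmax t r < 0) by (apply Rmax_lub_lt; lra).
      apply (in_all_level_sets Hf _ _); [exact Hmax |]; intros s Hs.
      destruct (level_set_ideal_above x t s Hlev (proj1 Ht) Hx ltac:(lra))
        as [Hxs [_ [_ Hcomb]]].
      assert (Hys : level_set k f s y) by (left; lra).
      exact (Hcomb z x y Hxs Hys).
Qed.
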